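(* The associated metric $\tilde g$ is Killing (i.e. $\tilde g([x,y],z)=\tilde g(x,[y,z])$ for all $x,y,z\in\mathfrak l$) if and only if $(L,\varphi,\xi,\eta,g)$ belongs to $\mathcal{F}_8\oplus\mathcal{F}_9\oplus\mathcal{F}_{10}$ with $2\lambda=\mu=\nu$, where $\lambda=F_{101}$, $\mu=F_{102}$, $\nu=F_{011}$. Equivalently, $\tilde g$ is Killing iff $C_{12}^0=-C_{01}^1=C_{02}^2$ and all other $C_{ij}^k$ ($i<j$) vanish.
   Context: Let $L$ be a 3-dimensional real connected Lie group with Lie algebra $\mathfrak l$, and let $\{E_0,E_1,E_2\}$ be a basis of left-invariant vector fields, with $[E_i,E_j]=C_{ij}^kE_k$. Define the left-invariant almost contact structure $(\varphi,\xi,\eta)$ by $\varphi E_0=0$, $\varphi E_1=E_2$, $\varphi E_2=-E_1$, $\xi=E_0$, $\eta(E_0)=1$, $\eta(E_1)=\eta(E_2)=0$, and the left-invariant pseudo-Riemannian metric $g$ by $g(E_0,E_0)=g(E_1,E_1)=-g(E_2,E_2)=1$, $g(E_i,E_j)=0$ for $i\neq j$. The associated metric is $\tilde g(x,y)=g(x,\varphi y)+\eta(x)\eta(y)$. Let $\nabla$ be the Levi-Civita connection of $g$, $F(x,y,z)=g((\nabla_x\varphi)y,z)$, and $F_{ijk}=F(E_i,E_j,E_k)$. The manifold belongs to $\mathcal{F}_8\oplus\mathcal{F}_9\oplus\mathcal{F}_{10}$ iff all $F_{ijk}$ vanish except possibly $F_{101}=F_{110}=F_{202}=F_{220}=:\lambda$,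 $F_{102}=F_{120}=-F_{201}=-F_{210}=:\mu$, and $F_{011}=F_{022}=:\nu$ (these are respectively the $\mathcal{F}_8$, $\mathcal{F}_9$, $\mathcal{F}_{10}$ parts). *)

From Stdlib Require Import Reals Lra.
Open Scope R_scope.

(* Indices of the left-invariant frame {E_0, E_1, E_2}. *)
Inductive idx : Type := I0 | I1 | I2.

(* A left-invariant vector field = its constant coordinates in {E_0,E_1,E_2}. *)
Definition vec := idx -> R.

Definition sum3 (f : idx -> R) : R := f I0 + f I1 + f I2.

Definition idx_eqb (i j : idx) : bool :=
  match i, j with
  | I0, I0 | I1, I1 | I2, I2 => true
  | _, _ => false
  end.

Definition basis (i : idx) : vec := fun k => if idx_eqb i k then 1 else 0.

Definition vsub (x y : vec) : vec := fun k => x k - y k.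

(* Structure constants: C i j k = C_{ij}^k, i.e. [E_i,E_j] = sum_k C_{ij}^k E_k. *)
Definition structconst := idx -> idx -> idx -> R.

Definition bracket (C : structconst) (x y : vec) : vec :=
  fun k => sum3 (fun i => sum3 (fun j => x i * y j * C i j k)).

Definition is_lie_algebra (C : structconst) : Prop :=
  (forall i j k, C i j k = - C j i k) /\
  (forall i j k m,
      sum3 (fun l => C i j l * C l k m + C j k l * C l i m + C k i l * C l j m) = 0).

Definition phi (x : vec) : vec :=
  fun k => match k with I0 => 0 | I1 => - x I2 | I2 => x I1 end.
Definition eta (x : vec) : R := x I0.
Definition xi : vec := basis I0.

Definition gm (x y : vec) : R := x I0 * y I0 + x I1 * y I1 - x I2 * y I2.

Definition gt (x y : vec) : R := gm x (phi y) + eta x * eta y.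

Definition killing (C : structconst) : Prop :=
  forall x y z : vec, gt (bracket C x y) z = gt x (bracket C y z).

(* A connection on left-invariant fields, given by nab i j = nabla_{E_i} E_j,
   extended bilinearly. *)
Definition connection := idx -> idx -> vec.

Definition nabla (nab : connection) (x y : vec) : vec :=
  fun k => sum3 (fun i => sum3 (fun j => x i * y j * nab i j k)).

(* Levi-Civita connection of g on left-invariant fields: torsion-free and
   metric (g(E_j,E_k) is constant, so E_i(g(E_j,E_k)) = 0). *)
Definition is_levi_civita (C : structconst) (nab : connection) : Prop :=
  (forall i j, forall k, nab i j k - nab j i k = C i j k) /\
  (forall i j k, gm (nab i j) (basis k) + gm (basis j) (nab i k) = 0).

(* F(x,y,z) = g((nabla_x phi) y, z), (nabla_x phi) y = nabla_x (phi y) - phi (nabla_x y). *)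
Definition Ften (nab : connection) (x y z : vec) : R :=
  gm (vsub (nabla nab x (phi y)) (phi (nabla nab x y))) z.

Definition Fcomp (nab : connection) (i j k : idx) : R :=
  Ften nab (basis i) (basis j) (basis k).

Definition F_lambda (F : idx -> idx -> idx -> R) : R := F I1 I0 I1.
Definition F_mu (F : idx -> idx -> idx -> R) : R := F I1 I0 I2.
Definition F_nu (F : idx -> idx -> idx -> R) : R := F I0 I1 I1.

Definition F8910_pattern (l m n : R) (i j k : idx) : R :=
  match i, j, k with
  | I1, I0, I1 | I1, I1, I0 | I2, I0, I2 | I2, I2, I0 => l
  | I1, I0, I2 | I1, I2, I0 => m
  | I2, I0, I1 | I2, I1, I0 => - m
  | I0, I1, I1 | I0, I2, I2 => n
  | _, _, _ => 0
  end.

Definition in_F8_F9_F10 (F : idx -> idx -> idx -> R) : Prop :=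
  exists l m n, forall i j k, F i j k = F8910_pattern l m n i j k.

Definition killing_struct_cond (C : structconst) : Prop :=
  C I1 I2 I0 = - C I0 I1 I1 /\ - C I0 I1 I1 = C I0 I2 I2 /\
  C I0 I1 I0 = 0 /\ C I0 I1 I2 = 0 /\
  C I0 I2 I0 = 0 /\ C I0 I2 I1 = 0 /\
  C I1 I2 I1 = 0 /\ C I1 I2 I2 = 0.

(* Only the antisymmetry of the structure constants is needed: the Levi-Civita
   connection is then given by the Koszul formula, and both the Killing
   identity for g~ (by trilinearity, on basis triples) and the components
   F_ijk become explicit linear expressions in the nine constants C_01^k,
   C_02^k, C_12^k. Both conditions of the theorem then reduce to the same
   linear system on these constants. *)
From Stdlib Require Import Reals Lra FunctionalExtensionality.
Open Scope R_scope.

Definition antisymmetric (C : structconst) : Prop :=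
  forall i j k, C i j k = - C j i k.

Lemma lie_algebra_antisymmetric (C : structconst) :
  is_lie_algebra C -> antisymmetric C.
Proof. intros [A _]; exact A. Qed.

Definition structconst_of (a0 a1 a2 b0 b1 b2 c0 c1 c2 : R) : structconst :=
  fun i j k =>
    let v u0 u1 u2 := match k with I0 => u0 | I1 => u1 | I2 => u2 end in
    match i, j with
    | I0, I1 => v a0 a1 a2 | I1, I0 => v (- a0) (- a1) (- a2)
    | I0, I2 => v b0 b1 b2 | I2, I0 => v (- b0) (- b1) (- b2)
    | I1, I2 => v c0 c1 c2 | I2, I1 => v (- c0) (- c1) (- c2)
    | _, _ => 0
    end.

Lemma antisymmetric_structconst_of (C : structconst) :
  antisymmetric C ->
  C = structconst_of (C I0 I1 I0) (C I0 I1 I1) (C I0 I1 I2)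
                     (C I0 I2 I0) (C I0 I2 I1) (C I0 I2 I2)
                     (C I1 I2 I0) (C I1 I2 I1) (C I1 I2 I2).
Proof.
  intros A.
  apply functional_extensionality; intro i;
  apply functional_extensionality; intro j;
  apply functional_extensionality; intro k.
  pose proof (A i j k).
  destruct i, j, k; simpl; lra.
Qed.

Definition signature (k : idx) : R := match k with I2 => -1 | _ => 1 end.

(* Koszul formula for left-invariant fields: g(nabla_i E_j, E_k) is
   (C_ij^k g_kk - C_jk^i g_ii + C_ki^j g_jj) / 2, raised again by g_kk. *)
Definition koszul (C : structconst) : connection :=
  fun i j k =>
    signature k / 2 *
    (C i j k * signature k - C j k i * signature i + C k i j * signature j).

Lemma levi_civita_metric_compat (C : structconst) (nab : connection) :
  is_levi_civita C nab ->
  forall i j k, nab i j k * signature k + nab i k j * signature j = 0.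
Proof.
  intros [_ M] i j k; specialize (M i j k).
  unfold gm, basis in M; destruct j, k; simpl in M |- *; lra.
Qed.

Lemma levi_civita_koszul (C : structconst) (nab : connection) :
  is_levi_civita C nab -> nab = koszul C.
Proof.
  intros HLC.
  pose proof (levi_civita_metric_compat C nab HLC) as M.
  destruct HLC as [T _].
  apply functional_extensionality; intro i;
  apply functional_extensionality; intro j;
  apply functional_extensionality; intro k.
  pose proof (T i j k); pose proof (T j k i); pose proof (T k i j).
  pose proof (M i j k); pose proof (M j k i); pose proof (M k i j).
  pose proof (M i k j); pose proof (M j i k); pose proof (M k j i).
  unfold koszul; destruct i, j, k; simpl in *; lra.
Qed.

Definition killing_on_basis (C : structconst) : Prop :=
  forall i j k,
    gt (bracket C (basis i) (basis j)) (basis k) =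
    gt (basis i) (bracket C (basis j) (basis k)).

Lemma killing_defect_trilinear (C : structconst) (x y z : vec) :
  gt (bracket C x y) z - gt x (bracket C y z) =
  sum3 (fun i => sum3 (fun j => sum3 (fun k =>
    x i * y j * z k *
    (gt (bracket C (basis i) (basis j)) (basis k) -
     gt (basis i) (bracket C (basis j) (basis k)))))).
Proof.
  unfold gt, gm, phi, eta, bracket, sum3, basis; simpl; ring.
Qed.

Lemma killing_basis (C : structconst) : killing C <-> killing_on_basis C.
Proof.
  split; [intros K i j k; apply K |].
  intros KB x y z; apply Rminus_diag_uniq.
  rewrite killing_defect_trilinear.
  unfold sum3; rewrite !KB, !Rminus_diag_eq by reflexivity; ring.
Qed.

Lemma killing_structconst_of (a0 a1 a2 b0 b1 b2 c0 c1 c2 : R) :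
  let C := structconst_of a0 a1 a2 b0 b1 b2 c0 c1 c2 in
  killing C <-> killing_struct_cond C.
Proof.
  intros C; rewrite killing_basis; unfold killing_on_basis, killing_struct_cond.
  split.
  - intros KB.
    pose proof (KB I0 I1 I0); pose proof (KB I0 I1 I1); pose proof (KB I0 I1 I2);
    pose proof (KB I0 I2 I0); pose proof (KB I0 I2 I1); pose proof (KB I0 I2 I2);
    pose proof (KB I1 I2 I1); pose proof (KB I1 I2 I2); pose proof (KB I1 I0 I1).
    unfold C, gt, gm, phi, eta, bracket, sum3, basis in *; simpl in *.
    repeat split; lra.
  - intros (? & ? & ? & ? & ? & ? & ? & ?) i j k.
    unfold C, gt, gm, phi, eta, bracket, sum3, basis in *; simpl in *.
    destruct i, j, k; simpl; lra.
Qed.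

Definition F_table (a0 a1 a2 b0 b1 b2 c0 c1 c2 : R) (i j k : idx) : R :=
  match i, j, k with
  | I0, I0, I1 | I0, I1, I0 => b0
  | I0, I0, I2 | I0, I2, I0 => - a0
  | I0, I1, I1 | I0, I2, I2 => a2 + b1 + c0
  | I1, I0, I1 | I1, I1, I0 => (- a2 + b1 + c0) / 2
  | I1, I0, I2 | I1, I2, I0 => - a1
  | I1, I1, I1 | I1, I2, I2 => 2 * c1
  | I2, I0, I1 | I2, I1, I0 => - b2
  | I2, I0, I2 | I2, I2, I0 => (a2 - b1 + c0) / 2
  | I2, I1, I1 | I2, I2, I2 => - 2 * c2
  | _, _, _ => 0
  end.

Lemma Fcomp_koszul_structconst_of (a0 a1 a2 b0 b1 b2 c0 c1 c2 : R) (i j k : idx) :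
  Fcomp (koszul (structconst_of a0 a1 a2 b0 b1 b2 c0 c1 c2)) i j k =
  F_table a0 a1 a2 b0 b1 b2 c0 c1 c2 i j k.
Proof.
  unfold Fcomp, Ften, gm, vsub, nabla, phi, sum3, basis, koszul, signature.
  destruct i, j, k; simpl; lra.
Qed.

Lemma F8910_F_table (a0 a1 a2 b0 b1 b2 c0 c1 c2 : R) :
  let F := F_table a0 a1 a2 b0 b1 b2 c0 c1 c2 in
  in_F8_F9_F10 F /\ 2 * F_lambda F = F_mu F /\ F_mu F = F_nu F <->
  killing_struct_cond (structconst_of a0 a1 a2 b0 b1 b2 c0 c1 c2).
Proof.
  intros F; unfold F, killing_struct_cond, F_lambda, F_mu, F_nu; simpl.
  split.
  - intros ([l [m [n H]]] & ? & ?).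
    pose proof (H I0 I0 I1); pose proof (H I0 I0 I2); pose proof (H I1 I0 I1);
    pose proof (H I2 I0 I2); pose proof (H I1 I0 I2); pose proof (H I2 I0 I1);
    pose proof (H I1 I1 I1); pose proof (H I2 I1 I1).
    simpl in *; repeat split; lra.
  - intros (? & ? & ? & ? & ? & ? & ? & ?).
    split; [| split; lra].
    exists (c0 / 2), (- a1), (a2 + b1 + c0); intros i j k.
    destruct i, j, k; simpl; lra.
Qed.

Theorem theorem2p3 :
  forall (C : structconst) (nab : connection),
    is_lie_algebra C ->
    is_levi_civita C nab ->
    (killing C <->
       (in_F8_F9_F10 (Fcomp nab) /\
        2 * F_lambda (Fcomp nab) = F_mu (Fcomp nab) /\
        F_mu (Fcomp nab) = F_nu (Fcomp nab))) /\
    (killing C <-> killing_struct_cond C).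
Proof.
  intros C nab HL HLC.
  rewrite (levi_civita_koszul C nab HLC).
  rewrite (antisymmetric_structconst_of C (lie_algebra_antisymmetric C HL)).
  generalize (C I0 I1 I0) (C I0 I1 I1) (C I0 I1 I2) (C I0 I2 I0) (C I0 I2 I1)
             (C I0 I2 I2) (C I1 I2 I0) (C I1 I2 I1) (C I1 I2 I2).
  intros a0 a1 a2 b0 b1 b2 c0 c1 c2.
  assert (Fcomp (koszul (structconst_of a0 a1 a2 b0 b1 b2 c0 c1 c2)) =
          F_table a0 a1 a2 b0 b1 b2 c0 c1 c2) as ->.
  { do 3 (apply functional_extensionality; intro).
    apply Fcomp_koszul_structconst_of. }
  rewrite killing_structconst_of, F8910_F_table.
  split; reflexivity.
Qed.
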